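(* For real numbers $u>z\ge 10$ let $$c(z,u)=\sum\frac{1}{(n_1n_2n_3n_4)^{3/4}}\prod_{j=1}^4\min\!\left(\frac{\sqrt{n_j}}{\sqrt z},1\right),$$ where the sum is over positive integers $n_1,n_2,n_3,n_4\le u$ satisfying $\sqrt{n_1}+\sqrt{n_2}=\sqrt{n_3}+\sqrt{n_4}$, $n_1\ne n_3$ and $n_1\ne n_4$. Then $c(z,u)\ll z^{-3/2}$ uniformly for $u>z\ge 10$.
   Context: $f\ll g$ means $|f|\le Cg$ for some absolute positive constant $C$. *)

From Stdlib Require Import Reals List ZArith Arith.
Open Scope R_scope.

Definition sumR (M : nat) (f : nat -> R) : R :=
  fold_right Rplus 0 (map f (seq 1 M)).

Definition wt (z : R) (n : nat) : R := Rmin (sqrt (INR n) / sqrt z) 1.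

Definition term (z : R) (n1 n2 n3 n4 : nat) : R :=
  / Rpower (INR n1 * INR n2 * INR n3 * INR n4) (3/4)
  * (wt z n1 * wt z n2 * wt z n3 * wt z n4).

(* indicator of the summation conditions (positivity is built into sumR) *)
Definition admissible (u : R) (n1 n2 n3 n4 : nat) : bool :=
  (if Rle_dec (INR n1) u then true else false) &&
  (if Rle_dec (INR n2) u then true else false) &&
  (if Rle_dec (INR n3) u then true else false) &&
  (if Rle_dec (INR n4) u then true else false) &&
  (if Req_EM_T (sqrt (INR n1) + sqrt (INR n2)) (sqrt (INR n3) + sqrt (INR n4))
   then true else false) &&
  negb (Nat.eqb n1 n3) && negb (Nat.eqb n1 n4).

(* c(z,u); indices range over 1..up(u), which contains all n <= u *)
Definition c_zu (z u : R) : R :=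
  let M := Z.to_nat (up u) in
  sumR M (fun n1 => sumR M (fun n2 => sumR M (fun n3 => sumR M (fun n4 =>
    if admissible u n1 n2 n3 n4 then term z n1 n2 n3 n4 else 0)))).

From Stdlib Require Import Reals List Lia Lra Psatz Arith ZArith Classical.
Open Scope R_scope.

(* 1. Arithmetic structure.  If [sqrt n1 + sqrt n2 = sqrt n3 + sqrt n4] and
      [n1 <> n3, n4], then [n1 n3] and [n1 n4] are perfect squares; writing
      [n1 = q m1^2] with [q] squarefree, all four [n_j = q m_j^2] and
      [m1 + m2 = m3 + m4].  So [c(z,u)] is at most a sum over kernels [q] of
      sums over [m1 + m2 = m3 + m4].
   2. Factorisation.  On [n = q m^2] the summand factors as
      [q^{-3} prod_j f(y, m_j)] with [y = sqrt(z/q)] and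
      [f(y, m) = min (m^{-1/2} / y, m^{-3/2})].
   3. Energy bound.  [sum_{a + b = c + d} f(a) f(b) f(c) f(d) <= 1024 y^{-3}],
      from [f(m) <= (y m)^{-3/4}], the convolution estimate
      [sum_{c + d = N} (c d)^{-3/4} << N^{-1/2}] and
      [sum_a f(a) a^{-1/4} << y^{-3/4}].
   4. Summing [q^{-3} (q/z)^{3/2}] over [q] gives [c(z,u) <= 6144 z^{-3/2}].
   Sums over [n] are estimated by telescoping against discrete primitives
   written with the fourth roots [t n = n^{1/4}], which keeps every
   inequality polynomial. *)

(* Finite sums over lists: the sums [sumR] of the statement are sums over
   [seq 1 M], and the change of variables of the proof is done on lists. *)
Definition lsum {X} (l : list X) (F : X -> R) : R := fold_right Rplus 0 (map F l).

Lemma lsum_app {X} (l1 l2 : list X) F : lsum (l1 ++ l2) F = lsum l1 F + lsum l2 F.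
Proof. unfold lsum; induction l1; simpl; [lra|]. rewrite IHl1; lra. Qed.

Lemma lsum_nonneg {X} (l : list X) F : (forall x, In x l -> 0 <= F x) -> 0 <= lsum l F.
Proof.
  unfold lsum; induction l as [|a l IH]; simpl; intros H; [lra|].
  assert (0 <= F a) by auto. assert (0 <= fold_right Rplus 0 (map F l)) by auto. lra.
Qed.

Lemma lsum_le {X} (l : list X) F G : (forall x, In x l -> F x <= G x) -> lsum l F <= lsum l G.
Proof.
  unfold lsum; induction l as [|a l IH]; simpl; intros H; [lra|].
  assert (F a <= G a) by auto.
  assert (fold_right Rplus 0 (map F l) <= fold_right Rplus 0 (map G l)) by auto. lra.
Qed.

Lemma lsum_ext {X} (l : list X) F G : (forall x, In x l -> F x = G x) -> lsum l F = lsum l G.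
Proof. intros H; apply Rle_antisym; apply lsum_le; intros x Hx; rewrite H; auto; lra. Qed.

Lemma lsum_prod {X Y} (l1 : list X) (l2 : list Y) (F : X -> Y -> R) :
  lsum l1 (fun a => lsum l2 (F a)) = lsum (list_prod l1 l2) (fun p => F (fst p) (snd p)).
Proof.
  induction l1 as [|a l1 IH]; simpl; [reflexivity|].
  rewrite lsum_app, <- IH. unfold lsum; simpl. rewrite map_map. reflexivity.
Qed.

Lemma NoDup_prod {X Y} (l1 : list X) (l2 : list Y) :
  NoDup l1 -> NoDup l2 -> NoDup (list_prod l1 l2).
Proof.
  induction l1 as [|a l1 IH]; simpl; intros H1 H2; [constructor|]. inversion H1; subst.
  apply NoDup_app; auto.
  - apply NoDup_map_NoDup_ForallPairs; auto. intros x y _ _ E. inversion E; auto.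
  - intros [p1 p2] Hi Hi2. apply in_map_iff in Hi. destruct Hi as [y [Ey _]].
    inversion Ey; subst. apply in_prod_iff in Hi2. tauto.
Qed.

(* Since [enc] is a left inverse,
   distinct [x] use distinct [y]. *)
Lemma lsum_le_reindex {X Y} (l1 : list X) (l2 : list Y) (F : X -> R) (G : Y -> R)
  (enc : Y -> X) :
  NoDup l1 -> (forall y, In y l2 -> 0 <= G y) ->
  (forall x, In x l1 -> F x <> 0 -> exists y, In y l2 /\ enc y = x /\ F x <= G y) ->
  lsum l1 F <= lsum l2 G.
Proof.
  revert l2; induction l1 as [|x l1 IH]; intros l2 Hnd HG Hdom.
  - apply lsum_nonneg; auto.
  - inversion Hnd as [|? ? Hx Hnd1]; subst.
    change (F x + lsum l1 F <= lsum l2 G).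
    destruct (Req_EM_T (F x) 0) as [E|E].
    + rewrite E, Rplus_0_l. apply IH; auto. intros; apply Hdom; simpl; auto.
    + destruct (Hdom x (or_introl eq_refl) E) as [y [Hy [Ey Hle]]].
      destruct (in_split _ _ Hy) as [la [lb ->]].
      assert (Split : lsum (la ++ y :: lb) G = G y + lsum (la ++ lb) G).
      { rewrite !lsum_app. unfold lsum; simpl. lra. }
      rewrite Split. assert (lsum l1 F <= lsum (la ++ lb) G); [|lra].
      apply IH; auto.
      * intros y' Hy'. apply HG. apply in_app_or in Hy'. apply in_or_app; simpl; tauto.
      * intros x' Hx' E'. destruct (Hdom x' (or_intror Hx') E') as [y' [Hy' [Ey' Hle']]].
        exists y'. split; auto. apply in_app_or in Hy'. apply in_or_app.
        destruct Hy' as [|[<-|]]; auto. subst. contradiction.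
Qed.

Lemma sumR_S M f : sumR (S M) f = sumR M f + f (S M).
Proof.
  change (lsum (seq 1 (S M)) f = lsum (seq 1 M) f + f (S M)).
  rewrite seq_S, lsum_app. unfold lsum at 2; simpl. replace (1 + M)%nat with (S M) by lia. lra.
Qed.

Lemma sumR_le M f g : (forall i, (1 <= i <= M)%nat -> f i <= g i) -> sumR M f <= sumR M g.
Proof. intros H. apply lsum_le. intros x Hx; apply in_seq in Hx; apply H; lia. Qed.

Lemma sumR_ext M f g : (forall i, (1 <= i <= M)%nat -> f i = g i) -> sumR M f = sumR M g.
Proof. intros H. apply lsum_ext. intros x Hx; apply in_seq in Hx; apply H; lia. Qed.

Lemma sumR_nonneg M f : (forall i, (1 <= i <= M)%nat -> 0 <= f i) -> 0 <= sumR M f.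
Proof. intros H. apply lsum_nonneg. intros x Hx; apply in_seq in Hx; apply H; lia. Qed.

Lemma sumR_plus M f g : sumR M (fun i => f i + g i) = sumR M f + sumR M g.
Proof. induction M; [unfold sumR; simpl; lra|]. rewrite !sumR_S, IHM. lra. Qed.

Lemma sumR_scal M c f : sumR M (fun i => c * f i) = c * sumR M f.
Proof. induction M; [unfold sumR; simpl; lra|]. rewrite !sumR_S, IHM. lra. Qed.

Lemma sumR_zero M : sumR M (fun _ => 0) = 0.
Proof. induction M; [reflexivity|]. rewrite sumR_S, IHM; lra. Qed.

Lemma sumR_swap M N (F : nat -> nat -> R) :
  sumR M (fun i => sumR N (fun j => F i j)) = sumR N (fun j => sumR M (fun i => F i j)).
Proof.
  induction M.
  - symmetry; apply sumR_zero.
  - rewrite sumR_S, IHM, <- sumR_plus. apply sumR_ext; intros; rewrite sumR_S; reflexivity.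
Qed.

Lemma sumR_prod M f g :
  sumR M (fun a => sumR M (fun b => f a * g b)) = sumR M f * sumR M g.
Proof.
  rewrite Rmult_comm, <- sumR_scal. apply sumR_ext; intros.
  rewrite Rmult_comm, <- sumR_scal. reflexivity.
Qed.

Lemma sumR_single M e X : 0 <= X -> sumR M (fun d => if Nat.eqb d e then X else 0) <= X.
Proof.
  intros HX.
  assert (Gen : sumR M (fun d => if Nat.eqb d e then X else 0) <= if Nat.leb e M then X else 0).
  { induction M as [|M IH]; [unfold sumR; simpl; destruct (Nat.leb e 0); lra|].
    rewrite sumR_S. destruct (Nat.eqb (S M) e) eqn:E.
    - apply Nat.eqb_eq in E; subst. rewrite Nat.leb_refl.
      replace (Nat.leb (S M) M) with false in IH by (symmetry; apply Nat.leb_gt; lia). lra.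
    - apply Nat.eqb_neq in E. destruct (Nat.leb e M) eqn:E1.
      + apply Nat.leb_le in E1.
        replace (Nat.leb e (S M)) with true by (symmetry; apply Nat.leb_le; lia). lra.
      + destruct (Nat.leb e (S M)); lra. }
  destruct (Nat.leb e M); lra.
Qed.

Lemma sumR_telescope_down M (p : nat -> bool) (h H : nat -> R) B :
  (forall n, p (S n) = true -> p n = true) ->
  (forall c, (1 <= c)%nat -> h c <= H c - H (c - 1)%nat) -> H 0%nat = 0 ->
  (forall n, p n = true -> H n <= B) -> 0 <= B ->
  sumR M (fun c => if p c then h c else 0) <= B.
Proof.
  intros Hd Hh H0 HB B0.
  assert (Gen : sumR M (fun c => if p c then h c else 0) <= if p M then H M else B).
  { induction M as [|M IH]; [unfold sumR; simpl; destruct (p 0%nat); lra|].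
    rewrite sumR_S. destruct (p (S M)) eqn:E.
    - rewrite (Hd _ E) in IH. specialize (Hh (S M)).
      replace (S M - 1)%nat with M in Hh by lia.
      assert (h (S M) <= H (S M) - H M) by (apply Hh; lia). lra.
    - destruct (p M) eqn:E2; [specialize (HB M E2)|]; lra. }
  destruct (p M) eqn:E; [specialize (HB M E)|]; lra.
Qed.

Lemma sumR_telescope_up M (p : nat -> bool) (h G : nat -> R) B :
  (forall n, p n = true -> p (S n) = true) ->
  (forall c, (1 <= c)%nat -> h c <= G c - G (S c)) -> (forall n, (1 <= n)%nat -> 0 <= G n) ->
  (forall n, (1 <= n)%nat -> p n = true -> G n <= B) -> 0 <= B ->
  sumR M (fun c => if p c then h c else 0) <= B.
Proof.
  intros Hu Hh G0 HB B0.
  assert (Gen : sumR M (fun c => if p c then h c else 0) <= if p M then B - G (S M) else 0).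
  { induction M as [|M IH].
    - unfold sumR; simpl. destruct (p 0%nat) eqn:E; [|lra].
      pose proof (HB 1%nat (le_n _) (Hu _ E)). lra.
    - rewrite sumR_S. destruct (p (S M)) eqn:E.
      + assert (h (S M) <= G (S M) - G (S (S M))) by (apply Hh; lia).
        destruct (p M) eqn:E2; [lra|]. pose proof (HB (S M) ltac:(lia) E). lra.
      + destruct (p M) eqn:E2; [rewrite (Hu _ E2) in E; discriminate|lra]. }
  destruct (p M); [pose proof (G0 (S M) ltac:(lia))|]; lra.
Qed.

Definition L4 M := list_prod (list_prod (list_prod (seq 1 M) (seq 1 M)) (seq 1 M)) (seq 1 M).

Lemma NoDup_L4 M : NoDup (L4 M).
Proof. unfold L4. repeat apply NoDup_prod; apply seq_NoDup. Qed.

Lemma sumR4_as_lsum M (F : nat -> nat -> nat -> nat -> R) :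
  sumR M (fun a => sumR M (fun b => sumR M (fun c => sumR M (fun d => F a b c d)))) =
  lsum (L4 M) (fun x => F (fst (fst (fst x))) (snd (fst (fst x))) (snd (fst x)) (snd x)).
Proof.
  unfold L4.
  refine (eq_trans (lsum_prod (seq 1 M) (seq 1 M)
            (fun a b => sumR M (fun c => sumR M (fun d => F a b c d)))) _).
  refine (eq_trans (lsum_prod _ (seq 1 M)
            (fun p c => sumR M (fun d => F (fst p) (snd p) c d))) _).
  exact (lsum_prod _ (seq 1 M) (fun p d => F (fst (fst p)) (snd (fst p)) (snd p) d)).
Qed.

Lemma sumR4_scal M K (F : nat -> nat -> nat -> nat -> R) :
  sumR M (fun a => sumR M (fun b => sumR M (fun c => sumR M (fun d => K * F a b c d)))) =
  K * sumR M (fun a => sumR M (fun b => sumR M (fun c => sumR M (fun d => F a b c d)))).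
Proof.
  rewrite <- sumR_scal. apply sumR_ext; intros. rewrite <- sumR_scal. apply sumR_ext; intros.
  rewrite <- sumR_scal. apply sumR_ext; intros. rewrite <- sumR_scal. reflexivity.
Qed.

(* Fourth roots.  All exponents [n^{k/4}] of the proof are powers of
   [t n = n^{1/4}], which turns the estimates into polynomial inequalities. *)
Definition p4 (x : R) : R := sqrt (sqrt x).
Definition t (m : nat) : R := p4 (INR m).

Lemma p4_pos x : 0 < x -> 0 < p4 x.
Proof. intros; unfold p4; apply sqrt_lt_R0, sqrt_lt_R0; auto. Qed.

Lemma p4_sq x : 0 <= x -> p4 x ^ 2 = sqrt x.
Proof. intros; unfold p4; apply pow2_sqrt, sqrt_pos. Qed.

Lemma p4_pow4 x : 0 <= x -> p4 x ^ 4 = x.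
Proof.
  intros H. replace 4%nat with (2 * 2)%nat by reflexivity.
  rewrite pow_mult, p4_sq by auto. apply pow2_sqrt; auto.
Qed.

Lemma p4_le x y : 0 <= x <= y -> p4 x <= p4 y.
Proof. intros; unfold p4; apply sqrt_le_1_alt, sqrt_le_1_alt; lra. Qed.

Lemma p4_lt x y : 0 <= x < y -> p4 x < p4 y.
Proof.
  intros; unfold p4; apply sqrt_lt_1_alt; split; [apply sqrt_pos|].
  apply sqrt_lt_1_alt; lra.
Qed.

Lemma p4_mult x y : 0 <= x -> 0 <= y -> p4 (x * y) = p4 x * p4 y.
Proof. intros; unfold p4. rewrite sqrt_mult by auto. apply sqrt_mult; apply sqrt_pos. Qed.

Lemma t_nonneg m : 0 <= t m.
Proof. apply sqrt_pos. Qed.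

Lemma t_pos m : (1 <= m)%nat -> 0 < t m.
Proof. intros; apply p4_pos, lt_0_INR; lia. Qed.

Lemma t_pow4 m : t m ^ 4 = INR m.
Proof. apply p4_pow4, pos_INR. Qed.

Lemma t_le m n : (m <= n)%nat -> t m <= t n.
Proof. intros; apply p4_le. split; [apply pos_INR | apply le_INR; auto]. Qed.

Lemma t_ge1 m : (1 <= m)%nat -> 1 <= t m.
Proof.
  intros. replace 1 with (t 1) by (unfold t, p4; simpl; rewrite !sqrt_1; reflexivity).
  apply t_le; auto.
Qed.

Lemma t_0 : t 0 = 0.
Proof. unfold t, p4; simpl; rewrite !sqrt_0; reflexivity. Qed.

Lemma inv_le a b : 0 < a -> a <= b -> / b <= / a.
Proof. intros; apply Rinv_le_contravar; auto. Qed.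

Lemma nonneg_frac a b : 0 <= a -> 0 < b -> 0 <= a / b.
Proof. intros; apply Rmult_le_pos; auto. left; apply Rinv_0_lt_compat; auto. Qed.

(* Discharges the nonvanishing side conditions left by [field] from positivity
   hypotheses in the context. *)
Ltac nz := repeat split; try (apply Rgt_not_eq; lra); try (apply Rlt_not_eq; lra).

(* Discrete replacements for the integrals of [x^{-3/4}], [x^{-7/4}] and
   [x^{-3/2}]: each summand is bounded by a difference of consecutive values
   of a primitive, so that sums of them telescope. *)

Lemma inv_cube_le_step a b : 0 <= b <= a -> 0 < a -> a ^ 4 - b ^ 4 = 1 -> / a ^ 3 <= 4 * (a - b).
Proof.
  intros Hb Ha E.
  assert (Hfac : a ^ 4 - b ^ 4 <= 4 * a ^ 3 * (a - b)).
  { assert (4 * a ^ 3 * (a - b) - (a ^ 4 - b ^ 4)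
            = (a - b) * ((a ^ 3 - a ^ 2 * b) + (a ^ 3 - a * b ^ 2) + (a ^ 3 - b ^ 3))) by ring.
    assert (b ^ 2 <= a ^ 2) by (apply pow_incr; lra).
    assert (b ^ 3 <= a ^ 3) by (apply pow_incr; lra).
    assert (a ^ 2 * b <= a ^ 2 * a) by (apply Rmult_le_compat_l; nra).
    assert (a * b ^ 2 <= a * a ^ 2) by (apply Rmult_le_compat_l; lra).
    assert (0 <= (a - b) * ((a ^ 3 - a ^ 2 * b) + (a ^ 3 - a * b ^ 2) + (a ^ 3 - b ^ 3)))
      by (apply Rmult_le_pos; lra). lra. }
  assert (Pa3 : 0 < a ^ 3) by (apply pow_lt; auto).
  rewrite <- (Rmult_1_l (/ a ^ 3)), <- E.
  apply (Rmult_le_reg_r (a ^ 3)); auto. rewrite Rmult_assoc, Rinv_l by lra. lra.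
Qed.

Lemma t_inv3_le_step c : (1 <= c)%nat -> / t c ^ 3 <= 4 * (t c - t (c - 1)).
Proof.
  intros Hc. apply inv_cube_le_step.
  - split; [apply t_nonneg | apply t_le; lia].
  - apply t_pos; auto.
  - rewrite !t_pow4, minus_INR by lia. simpl; lra.
Qed.

Lemma inv_pow7_le_step a b : 1 <= a <= b -> b ^ 4 = a ^ 4 + 1 -> / a ^ 7 <= 4 * (/ a ^ 3 - / b ^ 3).
Proof.
  intros [Ha Hab] E.
  assert (Diff : 4 * (/ a ^ 3 - / b ^ 3) - / a ^ 7
                 = (4 * a ^ 4 * b ^ 3 * (b ^ 3 - a ^ 3) - b ^ 6) / (a ^ 7 * b ^ 6))
    by (field; split; lra).
  assert (0 <= (4 * a ^ 4 * b ^ 3 * (b ^ 3 - a ^ 3) - b ^ 6) / (a ^ 7 * b ^ 6)); [|lra].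
  apply nonneg_frac; [|apply Rmult_lt_0_compat; apply pow_lt; lra].
  (* the mean value estimate [b^4 - a^4 <= 4 b^3 (b - a)] *)
  assert (MV4 : 1 <= 4 * b ^ 3 * (b - a)).
  { assert (b ^ 4 - a ^ 4 = (b - a) * (b ^ 3 + b ^ 2 * a + b * a ^ 2 + a ^ 3)) by ring.
    assert (a ^ 3 <= b ^ 3) by (apply pow_incr; lra).
    assert (a ^ 2 <= b ^ 2) by (apply pow_incr; lra).
    assert (b ^ 2 * a <= b ^ 2 * b) by (apply Rmult_le_compat_l; nra).
    assert (b * a ^ 2 <= b * b ^ 2) by (apply Rmult_le_compat_l; lra).
    assert ((b - a) * (b ^ 3 + b ^ 2 * a + b * a ^ 2 + a ^ 3) <= (b - a) * (4 * b ^ 3))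
      by (apply Rmult_le_compat_l; lra). nra. }
  assert (MV3 : 3 * a ^ 2 * (b - a) <= b ^ 3 - a ^ 3).
  { assert (b ^ 3 - a ^ 3 = (b - a) * (b ^ 2 + a * b + a ^ 2)) as -> by ring.
    rewrite (Rmult_comm (3 * a ^ 2)). apply Rmult_le_compat_l; nra. }
  (* [b^6 <= 3 a^6], since [b^4 <= 2 a^4] *)
  assert (B6 : b ^ 6 <= 3 * a ^ 6).
  { assert (b ^ 4 <= 2 * a ^ 4) by (assert (1 <= a ^ 4) by (apply pow_R1_Rle; lra); lra).
    assert ((b ^ 6) ^ 2 <= (3 * a ^ 6) ^ 2).
    { replace ((b ^ 6) ^ 2) with ((b ^ 4) ^ 3) by ring.
      replace ((3 * a ^ 6) ^ 2) with (9 * (a ^ 4) ^ 3) by ring.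
      assert ((b ^ 4) ^ 3 <= (2 * a ^ 4) ^ 3)
        by (apply pow_incr; split; [apply pow_le; lra | lra]).
      assert (0 <= (a ^ 4) ^ 3) by (apply pow_le, pow_le; lra). nra. }
    assert (0 <= a ^ 6) by (apply pow_le; lra).
    assert (0 <= b ^ 6) by (apply pow_le; lra). nra. }
  assert (0 <= a ^ 4 * b ^ 3) by (apply Rmult_le_pos; apply pow_le; lra).
  assert (4 * a ^ 4 * b ^ 3 * (b ^ 3 - a ^ 3) >= 4 * a ^ 4 * b ^ 3 * (3 * a ^ 2 * (b - a))) by nra.
  assert (4 * a ^ 4 * b ^ 3 * (3 * a ^ 2 * (b - a)) = 3 * a ^ 6 * (4 * b ^ 3 * (b - a))) by ring.
  assert (0 <= a ^ 6) by (apply pow_le; lra).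
  nra.
Qed.

Lemma t_inv7_le_step c : (1 <= c)%nat -> / t c ^ 7 <= 4 * (/ t c ^ 3 - / t (S c) ^ 3).
Proof.
  intros Hc. apply inv_pow7_le_step.
  - split; [apply t_ge1; auto | apply t_le; lia].
  - rewrite !t_pow4, S_INR. lra.
Qed.

Lemma inv_cube_le_step_sq a b : 1 <= a <= b -> b ^ 2 = a ^ 2 + 1 -> / a ^ 3 <= 6 * (/ a - / b).
Proof.
  intros [Ha Hab] E.
  assert (Diff : 6 * (/ a - / b) - / a ^ 3 = (6 * a ^ 2 * (b - a) - b) / (a ^ 3 * b))
    by (field; split; lra).
  assert (0 <= (6 * a ^ 2 * (b - a) - b) / (a ^ 3 * b)); [|lra].
  apply nonneg_frac; [|apply Rmult_lt_0_compat; [apply pow_lt|]; lra].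
  assert (b <= 2 * a) by nra.
  assert ((b - a) * (b + a) = 1) by nra.
  assert (6 * a ^ 2 >= b * (a + b)) by nra.
  nra.
Qed.

Lemma t_inv6_le_step q : (1 <= q)%nat -> / t q ^ 6 <= 6 * (/ t q ^ 2 - / t (S q) ^ 2).
Proof.
  intros Hq. replace (t q ^ 6) with ((t q ^ 2) ^ 3) by ring.
  apply inv_cube_le_step_sq.
  - pose proof (t_ge1 q Hq). split; [nra|].
    apply pow_incr; split; [apply t_nonneg | apply t_le; lia].
  - replace ((t (S q) ^ 2) ^ 2) with (t (S q) ^ 4) by ring.
    replace ((t q ^ 2) ^ 2) with (t q ^ 4) by ring.
    rewrite !t_pow4, S_INR. lra.
Qed.

Lemma t_mult_le a b : t a * t b <= t (a + b) ^ 2.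
Proof.
  unfold t. rewrite <- p4_mult, p4_sq by apply pos_INR.
  unfold p4. apply sqrt_le_1_alt. rewrite plus_INR.
  pose proof (pos_INR a); pose proof (pos_INR b).
  assert (sqrt (INR a * INR b) <= sqrt ((INR a + INR b) ^ 2)) by (apply sqrt_le_1_alt; nra).
  rewrite sqrt_pow2 in H1 by lra. lra.
Qed.

(* The one-variable weight [f y m = min (m^{-1/2} / y, m^{-3/2})]; for
   [n = q m^2] the summand of [c(z,u)] factors through it (see [w_qm]). *)
Definition f (y : R) (m : nat) : R := Rmin (/ (t m ^ 2 * y)) (/ t m ^ 6).

Lemma f_nonneg y m : 0 < y -> (1 <= m)%nat -> 0 <= f y m.
Proof.
  intros Hy Hm. pose proof (t_pos m Hm). unfold f.
  apply Rmin_glb; left; apply Rinv_0_lt_compat; [apply Rmult_lt_0_compat|]; auto; apply pow_lt; auto.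
Qed.

(* [min (A, B) <= sqrt (A B)]: [f y m <= y^{-3/4} m^{-3/4}]. *)
Lemma f_le_geom y m : 0 < y -> (1 <= m)%nat -> f y m <= / (p4 y ^ 3 * t m ^ 3).
Proof.
  intros Hy Hm. pose proof (t_pos m Hm) as Ht. unfold f.
  set (s := p4 y). assert (Hs : 0 < s) by (apply p4_pos; auto).
  replace y with (s ^ 4) by (unfold s; rewrite p4_pow4; lra).
  destruct (Rle_dec (t m) s).
  - eapply Rle_trans; [apply Rmin_l|]. apply inv_le; [apply Rmult_lt_0_compat; apply pow_lt; auto|].
    replace (t m ^ 2 * s ^ 4) with ((s ^ 3 * t m ^ 2) * s) by ring.
    replace (s ^ 3 * t m ^ 3) with ((s ^ 3 * t m ^ 2) * t m) by ring.
    apply Rmult_le_compat_l; auto. apply Rmult_le_pos; apply pow_le; lra.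
  - eapply Rle_trans; [apply Rmin_r|]. apply inv_le; [apply Rmult_lt_0_compat; apply pow_lt; auto|].
    replace (t m ^ 6) with (t m ^ 3 * t m ^ 3) by ring.
    apply Rmult_le_compat_r; [apply pow_le; lra | apply pow_incr; lra].
Qed.

Lemma pow3_le_of_pow4 x w : 0 <= x -> 0 <= w -> w ^ 4 <= 2 * x ^ 4 -> w ^ 3 <= 2 * x ^ 3.
Proof.
  intros Hx Hw H. assert (0 <= x ^ 3) by (apply pow_le; lra). destruct (Rle_dec w x).
  - assert (w ^ 3 <= x ^ 3) by (apply pow_incr; lra). lra.
  - assert (x * (2 * x ^ 3) <= w * (2 * x ^ 3)) by (apply Rmult_le_compat_r; lra). nra.
Qed.

(* [(c d)^{-3/4} <= 2 (c+d)^{-3/4} (c^{-3/4} + d^{-3/4})], because the larger of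
   [c, d] is at least [(c+d)/2]. *)
Lemma inv_prod_le c d : (1 <= c)%nat -> (1 <= d)%nat ->
  / (t c ^ 3 * t d ^ 3) <= 2 / t (c + d) ^ 3 * (/ t c ^ 3 + / t d ^ 3).
Proof.
  assert (Ordered : forall m n, (1 <= m)%nat -> (m <= n)%nat ->
     / (t m ^ 3 * t n ^ 3) <= 2 / t (m + n) ^ 3 * / t m ^ 3).
  { intros m n Hm Hmn.
    assert (Pn : 0 < t n ^ 3) by (apply pow_lt, t_pos; lia).
    assert (PN : 0 < t (m + n)) by (apply t_pos; lia).
    assert (PN3 : 0 < t (m + n) ^ 3) by (apply pow_lt; lra).
    assert (t (m + n) ^ 3 <= 2 * t n ^ 3).
    { apply pow3_le_of_pow4; try apply t_nonneg.
      rewrite !t_pow4, plus_INR. apply le_INR in Hmn. lra. }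
    rewrite Rinv_mult, (Rmult_comm (2 / _)).
    apply Rmult_le_compat_l; [left; apply Rinv_0_lt_compat, pow_lt, t_pos; lia|].
    replace (2 / t (m + n) ^ 3) with (/ (t (m + n) ^ 3 / 2)) by (field; nz).
    apply inv_le; lra. }
  intros Hc Hd.
  assert (Pc : 0 < / t c ^ 3) by (apply Rinv_0_lt_compat, pow_lt, t_pos; auto).
  assert (Pd : 0 < / t d ^ 3) by (apply Rinv_0_lt_compat, pow_lt, t_pos; auto).
  assert (PK : 0 < 2 / t (c + d) ^ 3) by (apply Rdiv_lt_0_compat; [lra | apply pow_lt, t_pos; lia]).
  destruct (le_lt_dec c d).
  - pose proof (Ordered c d Hc l). nra.
  - pose proof (Ordered d c Hd ltac:(lia)).
    rewrite Rmult_comm, Nat.add_comm in H. nra.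
Qed.

Lemma sumR_antidiagonal_le M N (g : nat -> R) : (forall c, 0 <= g c) ->
  sumR M (fun c => sumR M (fun d => if Nat.eqb (c + d) N then g c else 0)) <=
  sumR M (fun c => if Nat.ltb c N then g c else 0).
Proof.
  intros Hg. apply sumR_le. intros c Hc. destruct (Nat.ltb c N) eqn:E.
  - apply Nat.ltb_lt in E.
    rewrite (sumR_ext M _ (fun d => if Nat.eqb d (N - c) then g c else 0)); [apply sumR_single; auto|].
    intros d Hd. destruct (Nat.eqb_spec (c + d) N), (Nat.eqb_spec d (N - c)); auto; lia.
  - apply Nat.ltb_ge in E. rewrite (sumR_ext M _ (fun _ => 0)); [rewrite sumR_zero; lra|].
    intros d Hd. destruct (Nat.eqb_spec (c + d) N); auto; lia.
Qed.

Lemma sumR_inv_t3_below M N :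
  sumR M (fun c => if Nat.ltb c N then / t c ^ 3 else 0) <= 4 * t N.
Proof.
  apply (sumR_telescope_down M (fun c => Nat.ltb c N) (fun c => / t c ^ 3) (fun c => 4 * t c)).
  - intros n H. apply Nat.ltb_lt in H; apply Nat.ltb_lt; lia.
  - intros c Hc. pose proof (t_inv3_le_step c Hc). lra.
  - rewrite t_0; lra.
  - intros n H. apply Nat.ltb_lt in H. pose proof (t_le n N ltac:(lia)). lra.
  - pose proof (t_nonneg N); lra.
Qed.

Lemma convolution_bound M N : (1 <= N)%nat ->
  sumR M (fun c => sumR M (fun d => if Nat.eqb (c + d) N then / (t c ^ 3 * t d ^ 3) else 0))
  <= 16 / t N ^ 2.
Proof.
  intros HN. set (K := 2 / t N ^ 3).
  assert (PN : 0 < t N) by (apply t_pos; auto).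
  assert (HK : 0 <= K) by (apply nonneg_frac; [lra | apply pow_lt; auto]).
  assert (inv3 : forall c, 0 <= / t c ^ 3).
  { intros c. destruct (Nat.eq_dec c 0) as [->|].
    - rewrite t_0; simpl. rewrite Rmult_0_l, Rinv_0; lra.
    - left; apply Rinv_0_lt_compat, pow_lt, t_pos; lia. }
  set (g := fun c => K * / t c ^ 3).
  assert (Hg : forall c, 0 <= g c) by (intros; apply Rmult_le_pos; auto).
  (* each half of the split sum is a single sum over [c < N] *)
  assert (Half : sumR M (fun c => sumR M (fun d => if Nat.eqb (c + d) N then g c else 0))
                 <= K * (4 * t N)).
  { eapply Rle_trans; [apply sumR_antidiagonal_le; auto|].
    rewrite (sumR_ext M _ (fun c => K * (if Nat.ltb c N then / t c ^ 3 else 0)))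
      by (intros; unfold g; destruct (Nat.ltb i N); lra).
    rewrite sumR_scal. apply Rmult_le_compat_l; auto. apply sumR_inv_t3_below. }
  apply Rle_trans with (sumR M (fun c => sumR M (fun d =>
     (if Nat.eqb (c + d) N then g c else 0) + (if Nat.eqb (d + c) N then g d else 0)))).
  { apply sumR_le; intros c Hc. apply sumR_le; intros d Hd.
    rewrite (Nat.add_comm d c). destruct (Nat.eqb (c + d) N) eqn:E; [|lra].
    apply Nat.eqb_eq in E. pose proof (inv_prod_le c d ltac:(lia) ltac:(lia)).
    rewrite E in H. unfold g, K. lra. }
  rewrite (sumR_ext M _ (fun c => sumR M (fun d => if Nat.eqb (c + d) N then g c else 0)
      + sumR M (fun d => if Nat.eqb (d + c) N then g d else 0))) by (intros; apply sumR_plus).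
  rewrite sumR_plus, (sumR_swap M M (fun c d => if Nat.eqb (d + c) N then g d else 0)).
  assert (K * (4 * t N) + K * (4 * t N) = 16 / t N ^ 2) by (unfold K; field; nz). lra.
Qed.

(* [sum_a f y a * a^{-1/4} <= 8 y^{-3/4}]: split at [a = y]; below, the first
   branch of the minimum gives [y^{-1} sum_{a <= y} a^{-3/4} <= 4 y^{-3/4}];
   above, the second gives [sum_{a > y} a^{-7/4} <= 4 y^{-3/4}]. *)
Lemma sum_weight_bound M y : 0 < y -> sumR M (fun a => f y a * / t a) <= 8 / p4 y ^ 3.
Proof.
  intros Hy. set (s := p4 y). assert (Hs : 0 < s) by (apply p4_pos; auto).
  assert (Ey : y = s ^ 4) by (unfold s; rewrite p4_pow4; lra).
  assert (Hy' : 0 < / y) by (apply Rinv_0_lt_compat; auto).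
  set (p := fun a => if Rle_dec (INR a) y then true else false).
  assert (Pdown : forall n, p (S n) = true -> p n = true).
  { intros n. unfold p. rewrite S_INR.
    destruct (Rle_dec (INR n + 1) y), (Rle_dec (INR n) y); auto; lra. }
  apply Rle_trans with (sumR M (fun a => (if p a then / y * / t a ^ 3 else 0)
                                        + (if negb (p a) then / t a ^ 7 else 0))).
  { apply sumR_le. intros a Ha. pose proof (t_pos a ltac:(lia)) as Pa.
    pose proof (Rinv_0_lt_compat _ Pa).
    unfold p, f. destruct (Rle_dec (INR a) y); simpl.
    - eapply Rle_trans; [apply Rmult_le_compat_r; [lra | apply Rmin_l]|]. right; field; nz.
    - eapply Rle_trans; [apply Rmult_le_compat_r; [lra | apply Rmin_r]|]. right; field; nz. }
  rewrite sumR_plus.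
  assert (Low : sumR M (fun a => if p a then / y * / t a ^ 3 else 0) <= / y * (4 * s)).
  { apply (sumR_telescope_down M p (fun a => / y * / t a ^ 3) (fun c => / y * (4 * t c))); auto.
    - intros c Hc. pose proof (t_inv3_le_step c Hc). nra.
    - rewrite t_0; lra.
    - intros n. unfold p. destruct (Rle_dec (INR n) y); [|discriminate]. intros _.
      assert (t n <= s) by (apply p4_le; split; [apply pos_INR | auto]). nra.
    - nra. }
  assert (High : sumR M (fun a => if negb (p a) then / t a ^ 7 else 0) <= 4 / s ^ 3).
  { apply (sumR_telescope_up M (fun a => negb (p a)) (fun a => / t a ^ 7) (fun c => 4 * / t c ^ 3)).
    - intros n. destruct (p n) eqn:E1, (p (S n)) eqn:E2; auto. rewrite (Pdown n E2) in E1; auto.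
    - intros c Hc. pose proof (t_inv7_le_step c Hc). lra.
    - intros n Hn. pose proof (Rinv_0_lt_compat _ (pow_lt _ 3 (t_pos n Hn))). lra.
    - intros n Hn. unfold p. destruct (Rle_dec (INR n) y); [discriminate|]. intros _.
      assert (s < t n) by (apply p4_lt; lra). unfold Rdiv. apply Rmult_le_compat_l; [lra|].
      apply inv_le; [apply pow_lt; auto | apply pow_incr; lra].
    - apply nonneg_frac; [lra | apply pow_lt; auto]. }
  assert (/ y * (4 * s) + 4 / s ^ 3 = 8 / s ^ 3) by (rewrite Ey; field; nz). lra.
Qed.

Definition energy M y := sumR M (fun a => sumR M (fun b => sumR M (fun c => sumR M (fun d =>
  if Nat.eqb (a + b) (c + d) then f y a * f y b * f y c * f y d else 0)))).

(* For fixed [a, b], the inner sum over [c + d = a + b] costs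
   [16 y^{-3/2} (a b)^{-1/4}]: bound [f] by [f_le_geom], apply the
   convolution estimate and [(a + b)^{-1/2} <= (a b)^{-1/4}]. *)
Lemma energy_fibre_bound M y a b : 0 < y -> (1 <= a)%nat -> (1 <= b)%nat ->
  sumR M (fun c => sumR M (fun d => if Nat.eqb (c + d) (a + b) then f y c * f y d else 0))
  <= 16 / p4 y ^ 6 * / (t a * t b).
Proof.
  intros Hy Ha Hb. set (s := p4 y). assert (Hs : 0 < s) by (apply p4_pos; auto).
  assert (Hs6 : 0 < / s ^ 6) by (apply Rinv_0_lt_compat, pow_lt; auto).
  apply Rle_trans with (/ s ^ 6 * (16 / t (a + b) ^ 2)).
  - eapply Rle_trans; [|apply Rmult_le_compat_l; [lra | apply (convolution_bound M (a + b)); lia]].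
    rewrite <- sumR_scal. apply sumR_le; intros c Hc. rewrite <- sumR_scal. apply sumR_le; intros d Hd.
    destruct (Nat.eqb (c + d) (a + b)); [|lra].
    pose proof (f_le_geom y c Hy ltac:(lia)); pose proof (f_le_geom y d Hy ltac:(lia)).
    pose proof (f_nonneg y c Hy ltac:(lia)); pose proof (f_nonneg y d Hy ltac:(lia)).
    eapply Rle_trans; [apply Rmult_le_compat; eauto|].
    right. pose proof (t_pos c ltac:(lia)); pose proof (t_pos d ltac:(lia)). fold s. field; nz.
  - pose proof (t_pos a Ha); pose proof (t_pos b Hb).
    assert (/ t (a + b) ^ 2 <= / (t a * t b))
      by (apply inv_le; [apply Rmult_lt_0_compat; auto | apply t_mult_le]).
    unfold Rdiv. nra.
Qed.

(* [energy <= 16 y^{-3/2} (sum_a f(a) a^{-1/4})^2 <= 1024 y^{-3}]. *)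
Lemma energy_bound M y : 0 < y -> energy M y <= 1024 / y ^ 3.
Proof.
  intros Hy. set (s := p4 y). assert (Hs : 0 < s) by (apply p4_pos; auto).
  assert (Ey : y = s ^ 4) by (unfold s; rewrite p4_pow4; lra).
  set (Q := sumR M (fun a => f y a * / t a)).
  apply Rle_trans with (16 / s ^ 6 * (Q * Q)).
  - unfold Q. rewrite <- sumR_prod, <- sumR_scal. unfold energy.
    apply sumR_le; intros a Ha. rewrite <- sumR_scal. apply sumR_le; intros b Hb.
    rewrite (sumR_ext M _ (fun c => f y a * f y b
       * sumR M (fun d => if Nat.eqb (c + d) (a + b) then f y c * f y d else 0))).
    2:{ intros c _. rewrite <- sumR_scal. apply sumR_ext. intros d _.
        rewrite (Nat.eqb_sym (a + b)). destruct (Nat.eqb (c + d) (a + b)); ring. }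
    rewrite sumR_scal.
    pose proof (f_nonneg y a Hy ltac:(lia)); pose proof (f_nonneg y b Hy ltac:(lia)).
    eapply Rle_trans; [apply Rmult_le_compat_l; [apply Rmult_le_pos; auto|];
                       apply energy_fibre_bound; auto; lia|].
    right. pose proof (t_pos a ltac:(lia)); pose proof (t_pos b ltac:(lia)). fold s. field; nz.
  - pose proof (sum_weight_bound M y Hy) as HQ. fold s Q in HQ.
    assert (0 <= Q).
    { apply sumR_nonneg; intros. apply Rmult_le_pos; [apply f_nonneg; auto; lia|].
      left; apply Rinv_0_lt_compat, t_pos; lia. }
    assert (Q * Q <= (8 / s ^ 3) * (8 / s ^ 3)) by (apply Rmult_le_compat; auto).
    assert (1024 / y ^ 3 = 16 / s ^ 6 * ((8 / s ^ 3) * (8 / s ^ 3))) by (rewrite Ey; field; nz).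
    rewrite H1. apply Rmult_le_compat_l; auto. apply nonneg_frac; [lra | apply pow_lt; auto].
Qed.

Open Scope nat_scope.

Definition sqfree (q : nat) := forall d, Nat.divide (d * d) q -> d = 1.

Lemma sqfree_nz q : sqfree q -> q <> 0.
Proof. intros H E. subst. assert (2 = 1) by (apply H; exists 0; lia). lia. Qed.

Lemma coprime_split (p r : nat) : r <> 0 ->
  exists g p' r', g <> 0 /\ p = p' * g /\ r = r' * g /\ Nat.gcd p' r' = 1.
Proof.
  intros Hr. set (g := Nat.gcd p r).
  assert (Hg : g <> 0) by (unfold g; intro E; apply Nat.gcd_eq_0 in E; lia).
  destruct (Nat.gcd_divide_l p r) as [p' Ep]. destruct (Nat.gcd_divide_r p r) as [r' Er].
  fold g in Ep, Er. exists g, p', r'. repeat split; auto.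
  assert (g = Nat.gcd p' r' * g).
  { unfold g at 1. rewrite Ep, Er at 1. rewrite Nat.gcd_mul_mono_r. reflexivity. }
  destruct (Nat.gcd p' r') as [|[|k]]; nia.
Qed.

Lemma square_of_mul_square x r p : r <> 0 -> x * (r * r) = p * p -> exists k, x = k * k.
Proof.
  intros Hr E. destruct (coprime_split p r Hr) as [g [p' [r' [Hg [-> [-> Hc]]]]]].
  assert (E2 : x * (r' * r') = p' * p') by (apply (Nat.mul_cancel_l _ _ (g * g)); nia).
  assert (D : Nat.divide r' p').
  { apply (Nat.gauss r' p' p'); [exists (x * r'); nia | rewrite Nat.gcd_comm; auto]. }
  assert (r' = 1) as ->.
  { apply Nat.divide_1_r. rewrite <- Hc. apply Nat.gcd_greatest; auto. apply Nat.divide_refl. }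
  exists p'. lia.
Qed.

Lemma sqfree_dvd_square q s : sqfree q -> Nat.divide q (s * s) -> Nat.divide q s.
Proof.
  intros Hq [k Ek]. pose proof (sqfree_nz q Hq) as Hq0.
  destruct (coprime_split s q Hq0) as [g [s' [q' [Hg [Es [Eq Hc]]]]]].
  assert (E2 : s' * s' * g = k * q') by (apply (Nat.mul_cancel_l _ _ g); auto; subst; nia).
  assert (D2 : Nat.divide q' (s' * g)).
  { apply (Nat.gauss q' s'); [exists k; lia | rewrite Nat.gcd_comm; auto]. }
  assert (D3 : Nat.divide q' g) by (apply (Nat.gauss q' s'); auto; rewrite Nat.gcd_comm; auto).
  assert (q' = 1) as ->.
  { apply Hq. destruct D3 as [w Ew]. exists w. subst q. rewrite Ew. lia. }
  exists s'. lia.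
Qed.

Lemma square_product_shares_kernel q m n s : sqfree q -> m <> 0 ->
  q * (m * m) * n = s * s -> exists b, n = q * (b * b).
Proof.
  intros Hq Hm E. pose proof (sqfree_nz q Hq) as Hq0.
  destruct (sqfree_dvd_square q s Hq ltac:(exists (m * m * n); lia)) as [u ->].
  assert (E3 : (q * n) * (m * m) = (q * u) * (q * u))
    by (apply (Nat.mul_cancel_l _ _ q); auto; nia).
  destruct (square_of_mul_square (q * n) m (q * u) Hm E3) as [k Ek].
  destruct (sqfree_dvd_square q k Hq ltac:(exists n; lia)) as [b ->].
  exists b. apply (Nat.mul_cancel_l _ _ q); auto. nia.
Qed.

Lemma sqfree_decomposition n : n <> 0 -> exists q m, sqfree q /\ m <> 0 /\ n = q * (m * m).
Proof.
  induction n as [n IH] using lt_wf_ind. intros Hn.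
  destruct (classic (exists d, 2 <= d /\ Nat.divide (d * d) n)) as [[d [Hd [k Ek]]]|N].
  - assert (k <> 0) by (intro; subst; lia).
    assert (4 <= d * d) by nia.
    assert (k * 4 <= k * (d * d)) by (apply Nat.mul_le_mono_l; auto).
    destruct (IH k ltac:(lia) ltac:(lia)) as [q [m [Hq [Hm Ekq]]]].
    exists q, (d * m). repeat split; auto; nia.
  - exists n, 1. repeat split; try lia. intros d Hd.
    destruct d as [|[|d]]; [destruct Hd as [w Ew]; lia | reflexivity |].
    exfalso; apply N. exists (S (S d)). split; auto; lia.
Qed.

Close Scope nat_scope.

Lemma sum_prod_eq (X Y U V : nat) : (X + Y = U + V)%nat -> (X * Y = U * V)%nat -> X = U \/ X = V.
Proof.
  intros E1 E2. assert (((Z.of_nat X - Z.of_nat U) * (Z.of_nat X - Z.of_nat V) = 0)%Z) by nia.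
  apply Z.mul_eq_0 in H. lia.
Qed.

Lemma sqrt_nat_inj a b : sqrt (INR a) = sqrt (INR b) -> a = b.
Proof.
  intros E. apply INR_eq.
  rewrite <- (sqrt_sqrt (INR a)), <- (sqrt_sqrt (INR b)) by apply pos_INR. rewrite E; auto.
Qed.

Lemma sqrt_mul_sqrt_nat a b : sqrt (INR a) * sqrt (INR b) = sqrt (INR (a * b)).
Proof. rewrite mult_INR, sqrt_mult by apply pos_INR. reflexivity. Qed.

(* If [2 (sqrt(A B) - sqrt(C D))] is an integer and [A B <> C D], then [A B]
   is a perfect square: [sqrt(A B) + sqrt(C D) = (A B - C D) / (sqrt(A B) - sqrt(C D))]
   is then rational, hence so is [sqrt(A B)]. *)
Lemma product_square_of_integer_gap (A B C D : nat) (e : Z) : (A * B <> C * D)%nat ->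
  2 * (sqrt (INR A) * sqrt (INR B) - sqrt (INR C) * sqrt (INR D)) = IZR e ->
  exists k, (A * B = k * k)%nat.
Proof.
  rewrite !sqrt_mul_sqrt_nat. intros Hne E.
  pose proof (sqrt_sqrt _ (pos_INR (A * B))) as Hx2.
  pose proof (sqrt_sqrt _ (pos_INR (C * D))) as Hw2.
  pose proof (sqrt_pos (INR (A * B))) as Hx0.
  set (x := sqrt (INR (A * B))) in *. set (w := sqrt (INR (C * D))) in *.
  assert (He : e <> 0%Z).
  { intros ->. apply Hne, INR_eq. rewrite <- Hx2, <- Hw2. simpl in E. replace w with x by lra. ring. }
  clearbody x w.
  set (P := (4 * Z.of_nat (A * B) - 4 * Z.of_nat (C * D) + e * e)%Z).
  assert (EP : x * IZR (4 * e) = IZR P).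
  { unfold P. rewrite !plus_IZR, !minus_IZR, !mult_IZR, <- !INR_IZR_INZ, <- Hx2, <- Hw2.
    replace w with (x - IZR e / 2) by lra. simpl. field. }
  assert (EA : x * INR (Z.abs_nat (4 * e)) = INR (Z.abs_nat P)).
  { rewrite !INR_IZR_INZ, !Zabs2Nat.id_abs, <- !Rabs_Zabs, <- EP, Rabs_mult.
    rewrite (Rabs_right x) by lra. reflexivity. }
  apply (square_of_mul_square (A * B) (Z.abs_nat (4 * e)) (Z.abs_nat P)); [lia|].
  apply INR_eq. rewrite (mult_INR (A * B)), (mult_INR (Z.abs_nat P)), <- Hx2, <- EA, mult_INR.
  ring.
Qed.

(* With [sqrt n1 + sqrt n2 = sqrt n3 + sqrt n4] and [n1 <> n3, n4], the product
   [n1 n3] is a square: squaring [sqrt n1 - sqrt n3 = sqrt n4 - sqrt n2] gives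
   [2 (sqrt(n1 n3) - sqrt(n2 n4)) = n1 + n3 - n2 - n4], and [n1 n3 = n2 n4] is
   impossible. *)
Lemma sqrt_relation_product_square (n1 n2 n3 n4 : nat) :
  sqrt (INR n1) + sqrt (INR n2) = sqrt (INR n3) + sqrt (INR n4) -> n1 <> n3 -> n1 <> n4 ->
  exists k, (n1 * n3 = k * k)%nat.
Proof.
  intros E N3 N4.
  set (e := (Z.of_nat n1 + Z.of_nat n3 - Z.of_nat n2 - Z.of_nat n4)%Z).
  assert (Ee : 2 * (sqrt (INR n1) * sqrt (INR n3) - sqrt (INR n2) * sqrt (INR n4)) = IZR e).
  { unfold e. rewrite !minus_IZR, !plus_IZR, <- !INR_IZR_INZ.
    rewrite <- (sqrt_sqrt (INR n1)) at 2 by apply pos_INR.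
    rewrite <- (sqrt_sqrt (INR n2)) at 2 by apply pos_INR.
    rewrite <- (sqrt_sqrt (INR n3)) at 2 by apply pos_INR.
    rewrite <- (sqrt_sqrt (INR n4)) at 2 by apply pos_INR.
    replace (sqrt (INR n1)) with (sqrt (INR n3) + sqrt (INR n4) - sqrt (INR n2)) by lra. ring. }
  apply (product_square_of_integer_gap n1 n3 n2 n4 e); auto. intros Hprod.
  assert (Hsum : (n1 + n3 = n2 + n4)%nat).
  { rewrite !sqrt_mul_sqrt_nat, Hprod in Ee.
    assert (e = 0%Z) by (apply eq_IZR; lra). unfold e in *. lia. }
  destruct (sum_prod_eq n1 n3 n2 n4 Hsum Hprod) as [->|]; [|contradiction].
  assert (n3 = n4) as -> by lia. apply N3, sqrt_nat_inj. lra.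
Qed.

Lemma sqrt_kernel_form q m : sqrt (INR (q * (m * m))) = INR m * sqrt (INR q).
Proof.
  rewrite mult_INR, sqrt_mult by (try apply pos_INR; rewrite mult_INR; apply Rmult_le_pos; apply pos_INR).
  rewrite mult_INR, sqrt_square by apply pos_INR. ring.
Qed.

Lemma sqrt_relation_structure (n1 n2 n3 n4 : nat) :
  (1 <= n1)%nat -> (1 <= n2)%nat -> (1 <= n3)%nat -> (1 <= n4)%nat ->
  sqrt (INR n1) + sqrt (INR n2) = sqrt (INR n3) + sqrt (INR n4) -> n1 <> n3 -> n1 <> n4 ->
  exists q m1 m2 m3 m4, (1 <= q)%nat /\ (1 <= m1)%nat /\ (1 <= m2)%nat /\ (1 <= m3)%nat /\
    (1 <= m4)%nat /\ n1 = (q * (m1 * m1))%nat /\ n2 = (q * (m2 * m2))%nat /\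
    n3 = (q * (m3 * m3))%nat /\ n4 = (q * (m4 * m4))%nat /\ (m1 + m2 = m3 + m4)%nat.
Proof.
  intros H1 H2 H3 H4 E N3 N4.
  destruct (sqfree_decomposition n1 ltac:(lia)) as [q [m1 [Hq [Hm1 ->]]]].
  pose proof (sqfree_nz q Hq).
  destruct (sqrt_relation_product_square _ _ _ _ E N3 N4) as [k3 E3].
  assert (E' : sqrt (INR (q * (m1 * m1))) + sqrt (INR n2) = sqrt (INR n4) + sqrt (INR n3)) by lra.
  destruct (sqrt_relation_product_square _ _ _ _ E' N4 N3) as [k4 E4].
  destruct (square_product_shares_kernel q m1 n3 k3 Hq Hm1 E3) as [m3 ->].
  destruct (square_product_shares_kernel q m1 n4 k4 Hq Hm1 E4) as [m4 ->].
  rewrite !sqrt_kernel_form in E.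
  assert (Pq : 0 < sqrt (INR q)) by (apply sqrt_lt_R0, lt_0_INR; lia).
  assert (Pn2 : 0 < sqrt (INR n2)) by (apply sqrt_lt_R0, lt_0_INR; lia).
  (* [sqrt n2 = (m3 + m4 - m1) sqrt q] with [m1 < m3 + m4] *)
  assert (Lt : (m1 < m3 + m4)%nat).
  { apply INR_lt. rewrite plus_INR.
    apply (Rmult_lt_reg_r (sqrt (INR q))); auto. lra. }
  exists q, m1, (m3 + m4 - m1)%nat, m3, m4.
  assert (m3 <> 0)%nat by (intros ->; lia). assert (m4 <> 0)%nat by (intros ->; lia).
  repeat split; try lia.
  apply sqrt_nat_inj. rewrite sqrt_kernel_form, minus_INR, plus_INR by lia. lra.
Qed.

Lemma Rmin_scal c a b : 0 < c -> c * Rmin a b = Rmin (c * a) (c * b).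
Proof. intros Hc. unfold Rmin. destruct (Rle_dec a b), (Rle_dec (c * a) (c * b)); auto; nra. Qed.

Lemma Rpower_three_quarters x : 0 < x -> Rpower x (3 / 4) = p4 x ^ 3.
Proof.
  intros Hx. assert (E : p4 x = Rpower x (/ 4)).
  { unfold p4. rewrite <- (Rpower_sqrt x Hx).
    rewrite <- (Rpower_sqrt (Rpower x (/ 2))) by (unfold Rpower; apply exp_pos).
    rewrite Rpower_mult. f_equal. field. }
  rewrite E, <- Rpower_pow by (unfold Rpower; apply exp_pos). rewrite Rpower_mult.
  f_equal. simpl. field.
Qed.

Lemma Rpower_pos a b : 0 < Rpower a b.
Proof. apply exp_pos. Qed.

Definition w (z : R) (n : nat) : R := / Rpower (INR n) (3 / 4) * wt z n.

Lemma term_factor z n1 n2 n3 n4 :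
  (1 <= n1)%nat -> (1 <= n2)%nat -> (1 <= n3)%nat -> (1 <= n4)%nat ->
  term z n1 n2 n3 n4 = w z n1 * w z n2 * w z n3 * w z n4.
Proof.
  intros. unfold term, w.
  assert (Pos : forall n, (1 <= n)%nat -> 0 < INR n) by (intros; apply lt_0_INR; lia).
  rewrite <- !Rpower_mult_distr by (repeat apply Rmult_lt_0_compat; auto).
  pose proof (Rpower_pos (INR n1) (3 / 4)); pose proof (Rpower_pos (INR n2) (3 / 4)).
  pose proof (Rpower_pos (INR n3) (3 / 4)); pose proof (Rpower_pos (INR n4) (3 / 4)).
  field; repeat split; apply Rgt_not_eq; auto.
Qed.

Lemma w_kernel_form z q m : 0 < z -> (1 <= q)%nat -> (1 <= m)%nat ->
  w z (q * (m * m)) = / t q ^ 3 * f (sqrt z / sqrt (INR q)) m.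
Proof.
  intros Hz Hq Hm. unfold w, wt, f.
  assert (Pq : 0 < INR q) by (apply lt_0_INR; lia).
  assert (Pm : 0 < INR m) by (apply lt_0_INR; lia).
  assert (Psz : 0 < sqrt z) by (apply sqrt_lt_R0; auto).
  assert (Psq : 0 < sqrt (INR q)) by (apply sqrt_lt_R0; auto).
  rewrite Rpower_three_quarters
    by (rewrite !mult_INR; apply Rmult_lt_0_compat; [|apply Rmult_lt_0_compat]; auto).
  rewrite !mult_INR, p4_mult, p4_mult by (try apply Rmult_le_pos; lra).
  fold (t q) (t m).
  rewrite sqrt_mult, sqrt_mult, sqrt_sqrt by (try apply Rmult_le_pos; lra).
  pose proof (t_pos q Hq) as Tq. pose proof (t_pos m Hm) as Tm.
  assert (Em : INR m = t m ^ 4) by (rewrite t_pow4; auto).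
  replace (/ (t q * (t m * t m)) ^ 3) with (/ t q ^ 3 * / t m ^ 6) by (field; nz).
  rewrite Rmult_assoc, Rmin_scal by (apply Rinv_0_lt_compat, pow_lt; auto).
  f_equal. f_equal.
  - rewrite Em. field. nz.
  - ring.
Qed.

Definition kernel_term z q m1 m2 m3 m4 :=
  if Nat.eqb (m1 + m2) (m3 + m4)
  then term z (q * (m1 * m1)) (q * (m2 * m2)) (q * (m3 * m3)) (q * (m4 * m4)) else 0.

Lemma term_nonneg z a b c d : 0 < z -> 0 <= term z a b c d.
Proof.
  intros Hz. unfold term.
  assert (wn : forall n, 0 <= wt z n).
  { intros n. unfold wt. apply Rmin_glb; [|lra]. apply Rmult_le_pos; [apply sqrt_pos|].
    left; apply Rinv_0_lt_compat, sqrt_lt_R0; auto. }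
  apply Rmult_le_pos; [left; apply Rinv_0_lt_compat, Rpower_pos|].
  repeat apply Rmult_le_pos; auto.
Qed.

Lemma kernel_term_nonneg z q m1 m2 m3 m4 : 0 < z -> 0 <= kernel_term z q m1 m2 m3 m4.
Proof. intros Hz. unfold kernel_term. destruct Nat.eqb; [apply term_nonneg; auto | lra]. Qed.

(* For fixed [q], the sum is [q^{-3} energy(sqrt z / sqrt q) <= 1024 z^{-3/2} q^{-3/2}]. *)
Lemma kernel_sum_bound M z q : 0 < z -> (1 <= q)%nat ->
  sumR M (fun a => sumR M (fun b => sumR M (fun c => sumR M (fun d => kernel_term z q a b c d))))
  <= 1024 / (z * sqrt z) * / t q ^ 6.
Proof.
  intros Hz Hq. set (y := sqrt z / sqrt (INR q)).
  assert (Pq : 0 < INR q) by (apply lt_0_INR; lia).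
  assert (Psz : 0 < sqrt z) by (apply sqrt_lt_R0; auto).
  assert (Psq : 0 < sqrt (INR q)) by (apply sqrt_lt_R0; auto).
  assert (Hy : 0 < y) by (apply Rdiv_lt_0_compat; auto).
  assert (Tq : 0 < t q) by (apply t_pos; auto).
  rewrite (sumR_ext M _ (fun a => sumR M (fun b => sumR M (fun c => sumR M (fun d =>
     / t q ^ 12 * (if Nat.eqb (a + b) (c + d) then f y a * f y b * f y c * f y d else 0)))))).
  2:{ intros a Ha. apply sumR_ext; intros b Hb. apply sumR_ext; intros c Hc.
      apply sumR_ext; intros d Hd. unfold kernel_term. destruct (Nat.eqb (a + b) (c + d)); [|ring].
      rewrite term_factor, !w_kernel_form by (auto; nia). fold y. field. nz. }
  rewrite sumR4_scal. fold (energy M y).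
  eapply Rle_trans;
    [apply Rmult_le_compat_l; [left; apply Rinv_0_lt_compat, pow_lt; auto | apply energy_bound; auto]|].
  right. unfold y.
  assert (E2 : t q ^ 2 = sqrt (INR q)) by (apply p4_sq; lra).
  replace (t q ^ 12) with ((t q ^ 2) ^ 6) by ring. replace (t q ^ 6) with ((t q ^ 2) ^ 3) by ring.
  rewrite E2. rewrite <- (sqrt_sqrt z) at 2 by lra. field. nz.
Qed.

Lemma sum_inv_t6_le M : sumR M (fun q => / t q ^ 6) <= 6.
Proof.
  change (sumR M (fun c => if (fun _ => true) c then / t c ^ 6 else 0) <= 6).
  apply (sumR_telescope_up M (fun _ => true) (fun c => / t c ^ 6) (fun c => 6 * / t c ^ 2));
    auto; [| | |lra].
  - intros c Hc. pose proof (t_inv6_le_step c Hc). lra.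
  - intros n Hn. pose proof (Rinv_0_lt_compat _ (pow_lt _ 2 (t_pos n Hn))). lra.
  - intros n Hn _. pose proof (t_ge1 n Hn). assert (1 <= t n ^ 2) by nra.
    assert (/ t n ^ 2 <= 1) by (rewrite <- Rinv_1; apply inv_le; lra). lra.
Qed.

Lemma admissible_relation u a b c d : admissible u a b c d = true ->
  sqrt (INR a) + sqrt (INR b) = sqrt (INR c) + sqrt (INR d) /\ a <> c /\ a <> d.
Proof.
  unfold admissible. intros H.
  apply andb_prop in H as [H N4]. apply andb_prop in H as [H N3].
  apply andb_prop in H as [_ Heq].
  apply Bool.negb_true_iff, Nat.eqb_neq in N3. apply Bool.negb_true_iff, Nat.eqb_neq in N4.
  destruct (Req_EM_T _ _); [auto | discriminate].
Qed.

Definition kernel_encode (p : nat * (nat * nat * nat * nat)) : nat * nat * nat * nat :=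
  let '(q, (m1, m2, m3, m4)) := p in
  (q * (m1 * m1), q * (m2 * m2), q * (m3 * m3), q * (m4 * m4))%nat.

(* Reindexing [c(z,u)] by the structure theorem: every admissible quadruple is
   [kernel_encode] of a quintuple in [1..M]^5 with [m1 + m2 = m3 + m4]. *)
Lemma c_zu_le_kernel_sum z u : 0 < z ->
  c_zu z u <= sumR (Z.to_nat (up u)) (fun q =>
    sumR (Z.to_nat (up u)) (fun a => sumR (Z.to_nat (up u)) (fun b =>
    sumR (Z.to_nat (up u)) (fun c => sumR (Z.to_nat (up u)) (fun d => kernel_term z q a b c d))))).
Proof.
  intros Hz. unfold c_zu. cbv zeta. set (M := Z.to_nat (up u)).
  rewrite sumR4_as_lsum.
  apply Rle_trans with (lsum (list_prod (seq 1 M) (L4 M)) (fun p =>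
    kernel_term z (fst p) (fst (fst (fst (snd p)))) (snd (fst (fst (snd p))))
                (snd (fst (snd p))) (snd (snd p)))).
  - apply (lsum_le_reindex _ _ _ _ kernel_encode (NoDup_L4 M)).
    { intros; apply kernel_term_nonneg; auto. }
    intros [[[a b] c] d] Hin HF. simpl in HF.
    destruct (admissible u a b c d) eqn:Ha; [|contradiction].
    destruct (admissible_relation u a b c d Ha) as [E [N3 N4]].
    unfold L4 in Hin. rewrite !in_prod_iff, !in_seq in Hin.
    destruct Hin as [[[Ia Ib] Ic] Id].
    destruct (sqrt_relation_structure a b c d ltac:(lia) ltac:(lia) ltac:(lia) ltac:(lia) E N3 N4)
      as [q [m1 [m2 [m3 [m4 [Hq [H1 [H2 [H3 [H4 [-> [-> [-> [-> Em]]]]]]]]]]]]]].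
    exists (q, (m1, m2, m3, m4)). split; [|split].
    + assert (Le : forall m, (1 <= m)%nat -> (q <= q * (m * m) /\ m <= q * (m * m))%nat) by
        (intros m Hm; assert (1 <= m * m)%nat by nia; split; nia).
      destruct (Le m1 H1), (Le m2 H2), (Le m3 H3), (Le m4 H4).
      unfold L4. rewrite !in_prod_iff, !in_seq. repeat split; lia.
    + reflexivity.
    + simpl. unfold kernel_term. rewrite Ha, (proj2 (Nat.eqb_eq _ _) Em). lra.
  - right. symmetry.
    refine (eq_trans _ (lsum_prod (seq 1 M) (L4 M) (fun q x =>
      kernel_term z q (fst (fst (fst x))) (snd (fst (fst x))) (snd (fst x)) (snd x)))).
    apply lsum_ext. intros q _. apply sumR4_as_lsum.
Qed.

Lemma c_zu_nonneg z u : 0 < z -> 0 <= c_zu z u.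
Proof.
  intros Hz. unfold c_zu. repeat (apply sumR_nonneg; intros).
  destruct admissible; [apply term_nonneg; auto | lra].
Qed.

Lemma Rpower_minus_three_halves z : 0 < z -> Rpower z (- (3 / 2)) = / (z * sqrt z).
Proof.
  intros Hz. rewrite Rpower_Ropp. f_equal.
  replace (3 / 2) with (1 + / 2) by field. rewrite Rpower_plus, Rpower_1, Rpower_sqrt; auto.
Qed.

Theorem lemma4p4 :
  exists C : R, 0 < C /\
    forall z u : R, 10 <= z -> z < u ->
      Rabs (c_zu z u) <= C * Rpower z (-(3/2)).
Proof.
  exists 6144. split; [lra|]. intros z u Hz Hu. assert (Hz0 : 0 < z) by lra.
  set (M := Z.to_nat (up u)).
  assert (Psz : 0 < sqrt z) by (apply sqrt_lt_R0; auto).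
  assert (K : 0 < 1024 / (z * sqrt z)) by (apply Rdiv_lt_0_compat; [lra | apply Rmult_lt_0_compat; auto]).
  rewrite Rabs_right by (apply Rle_ge, c_zu_nonneg; auto).
  rewrite Rpower_minus_three_halves by auto.
  eapply Rle_trans; [apply c_zu_le_kernel_sum; auto|]. fold M.
  eapply Rle_trans; [apply (sumR_le M _ (fun q => 1024 / (z * sqrt z) * / t q ^ 6));
                     intros q Hq; apply kernel_sum_bound; auto; lia|].
  rewrite sumR_scal. pose proof (sum_inv_t6_le M).
  replace (6144 * / (z * sqrt z)) with (1024 / (z * sqrt z) * 6) by (field; nz).
  apply Rmult_le_compat_l; lra.
Qed.
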